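(* Let $T$ be a complete theory in a countable language with monster model $\mathfrak{C}$, $\alpha$ a countable ordinal and $C\subseteq\mathfrak{C}^{\alpha}$ an $\equiv_{L}^{\alpha}$-class. Suppose $p\subseteq L_{\alpha}(\mathfrak{C})$ is a partial $C$-proper type as witnessed by $\psi$. Suppose $\varphi_{0},\dots,\varphi_{n-1},\psi'\in L_{\alpha}(\mathfrak{C})$ are such that $\bigvee_{i<n}\varphi_{i}\vee\psi'$ covers $C$ and $\psi'\vee\psi$ is not $C$-generic. Then for some $i<n$, $p\cup\{\varphi_{i}\}$ is $C$-proper.
   Context: $L_{\alpha}(\mathfrak{C})$ denotes formulas in variables $(v_{i})_{i<\alpha}$ with parameters from $\mathfrak{C}$. The Lascar graph on $\mathfrak{C}^{\alpha}$ joins two distinct tuples lying on a common infinite indiscernible sequence (over $\emptyset$); $\equiv_{L}^{\alpha}$ has as classes its connected components. $\operatorname{Aut}f_{L}(\mathfrak{C})$ is the group generated by automorphisms of $\mathfrak{C}$ fixing pointwise some small elementary substructure. For $\varphi(x,a)$ and an automorphism $\sigma$, $\sigma(\varphi)=\varphi(x,\sigma(a))$. A formula covers $C$ if every element of $C$ satisfies it. $\varphi$ is $C$-generic if finitely many translates $\sigma(\varphi)$, $\sigma\in\operatorname{Aut}f_{L}(\mathfrak{C})$, have a disjunction covering $C$; $\varphi$ is $C$-weakly generic if $\varphi\vee\psi$ is $C$-generic for some non-$C$-generic $\psi$; a partial type is $C$-(weakly) generic if all its formulas are. A partial type $p$ (a consistent set of formulas) is $C$-proper, witnessed by a non-$C$-generic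 formula $\psi$, if $\varphi\vee\psi$ is $C$-generic for every finite conjunction $\varphi$ of formulas of $p$. *)

From Stdlib Require Import List Arith Relations Fin.
Import ListNotations.

Record signature := Signature {
  fsym : Type; rsym : Type;
  farity : fsym -> nat; rarity : rsym -> nat }.

Definition countable (X : Type) : Prop :=
  exists f : X -> nat, forall x y, f x = f y -> x = y.

Definition countable_signature (S : signature) : Prop :=
  countable (fsym S) /\ countable (rsym S).

Record structure (S : signature) := Structure {
  carrier :> Type;
  finterp : forall f : fsym S, (Fin.t (farity S f) -> carrier) -> carrier;
  rinterp : forall r : rsym S, (Fin.t (rarity S r) -> carrier) -> Prop }.
Arguments finterp {S} s f args.
Arguments rinterp {S} s r args.

Section Syntax.
Variable S : signature.

Inductive term (P V : Type) : Type :=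
| tvar : V -> term P V
| tpar : P -> term P V
| tapp : forall f : fsym S, (Fin.t (farity S f) -> term P V) -> term P V.

(* Variables are well-scoped: a quantifier extends the variable type by one
   (option V), so [formula P V] has free variables among V only. *)
Inductive formula (P : Type) : Type -> Type :=
| fTrue  : forall V, formula P V
| fFalse : forall V, formula P V
| fEq    : forall V, term P V -> term P V -> formula P V
| fRel   : forall V (r : rsym S), (Fin.t (rarity S r) -> term P V) -> formula P V
| fNot   : forall V, formula P V -> formula P V
| fAnd   : forall V, formula P V -> formula P V -> formula P V
| fOr    : forall V, formula P V -> formula P V -> formula P V
| fAll   : forall V, formula P (option V) -> formula P V
| fEx    : forall V, formula P (option V) -> formula P V.

Fixpoint tmap {P Q V : Type} (g : P -> Q) (t : term P V) : term Q V :=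
  match t with
  | tvar _ _ x => tvar Q V x
  | tpar _ _ c => tpar Q V (g c)
  | tapp _ _ f args => tapp Q V f (fun k => tmap g (args k))
  end.

Fixpoint fmap {P Q : Type} (g : P -> Q) {V : Type} (phi : formula P V)
  : formula Q V :=
  match phi in formula _ V0 return formula Q V0 with
  | fTrue _ V0 => fTrue Q V0
  | fFalse _ V0 => fFalse Q V0
  | fEq _ V0 t1 t2 => fEq Q V0 (tmap g t1) (tmap g t2)
  | fRel _ V0 r args => fRel Q V0 r (fun k => tmap g (args k))
  | fNot _ V0 a => fNot Q V0 (fmap g a)
  | fAnd _ V0 a b => fAnd Q V0 (fmap g a) (fmap g b)
  | fOr _ V0 a b => fOr Q V0 (fmap g a) (fmap g b)
  | fAll _ V0 a => fAll Q V0 (fmap g a)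
  | fEx _ V0 a => fEx Q V0 (fmap g a)
  end.

Definition bigOr {P V : Type} (l : list (formula P V)) : formula P V :=
  fold_right (fOr P V) (fFalse P V) l.
Definition bigAnd {P V : Type} (l : list (formula P V)) : formula P V :=
  fold_right (fAnd P V) (fTrue P V) l.

Variable M : structure S.

Fixpoint eval_term {P V : Type} (pv : P -> M) (v : V -> M) (t : term P V) : M :=
  match t with
  | tvar _ _ x => v x
  | tpar _ _ c => pv c
  | tapp _ _ f args => finterp M f (fun k => eval_term pv v (args k))
  end.

Definition extend {V : Type} (v : V -> M) (m : M) : option V -> M :=
  fun o => match o with Some x => v x | None => m end.

Fixpoint sat {P : Type} (pv : P -> M) {V : Type} (phi : formula P V)
  : (V -> M) -> Prop :=
  match phi in formula _ V0 return (V0 -> M) -> Prop with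
  | fTrue _ _ => fun _ => True
  | fFalse _ _ => fun _ => False
  | fEq _ _ t1 t2 => fun v => eval_term pv v t1 = eval_term pv v t2
  | fRel _ _ r args => fun v => rinterp M r (fun k => eval_term pv v (args k))
  | fNot _ _ a => fun v => ~ sat pv a v
  | fAnd _ _ a b => fun v => sat pv a v /\ sat pv b v
  | fOr _ _ a b => fun v => sat pv a v \/ sat pv b v
  | fAll _ _ a => fun v => forall m : M, sat pv a (extend v m)
  | fEx _ _ a => fun v => exists m : M, sat pv a (extend v m)
  end.

End Syntax.

Arguments tvar {S P V}.
Arguments tpar {S P V}.
Arguments fTrue {S P V}.
Arguments fFalse {S P V}.
Arguments fOr {S P V}.
Arguments fAnd {S P V}.
Arguments fmap {S P Q} g {V}.
Arguments bigOr {S P V}.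
Arguments bigAnd {S P V}.
Arguments sat {S} M {P} pv {V} phi.

Definition noparam {X : Type} (e : Empty_set) : X := match e with end.

Definition card_lt (A B : Type) : Prop :=
  (exists f : A -> B, forall x y, f x = f y -> x = y) /\
  ~ (exists g : B -> A, forall x y, g x = g y -> x = y).

Section Monster.
Variable S : signature.
Variable M : structure S.

Definition automorphism (s : M -> M) : Prop :=
  (exists t : M -> M, (forall x, t (s x) = x) /\ (forall x, s (t x) = x)) /\
  (forall f args, s (finterp M f args) = finterp M f (fun k => s (args k))) /\
  (forall r args, rinterp M r args <-> rinterp M r (fun k => s (args k))).

Definition elementary (N : structure S) (e : N -> M) : Prop :=
  forall phi : formula S N Empty_set,
    sat N (fun c => c) phi noparam <-> sat M e phi noparam.

(* K is a type of cardinality kappa; "small" means cardinality < kappa *)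
Variable K : Type.

Definition kappa_saturated : Prop :=
  forall (X : Type) (e : X -> M), card_lt X K ->
  forall p : formula S X unit -> Prop,
    (forall l : list (formula S X unit), (forall phi, In phi l -> p phi) ->
       exists m : M, forall phi, In phi l -> sat M e phi (fun _ => m)) ->
    exists m : M, forall phi, p phi -> sat M e phi (fun _ => m).

Definition strongly_kappa_homogeneous : Prop :=
  forall (J : Type) (f g : J -> M), card_lt J K ->
    (forall phi : formula S Empty_set J,
        sat M noparam phi f <-> sat M noparam phi g) ->
    exists s, automorphism s /\ forall j, s (f j) = g j.

(* M is a monster model (of its complete theory T = Th(M)) with respect to a
   "big" cardinal kappa = |K| > 2^aleph0 >= |T|. *)
Definition monster : Prop :=
  inhabited M /\ card_lt (nat -> bool) K /\
  kappa_saturated /\ strongly_kappa_homogeneous.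

Definition fixes_small_model (s : M -> M) : Prop :=
  exists (N : structure S) (e : N -> M),
    elementary N e /\ card_lt N K /\ forall x, s (e x) = e x.

Inductive autf : (M -> M) -> Prop :=
| autf_gen s : automorphism s -> fixes_small_model s -> autf s
| autf_id : autf (fun x => x)
| autf_comp s t : autf s -> autf t -> autf (fun x => s (t x))
| autf_inv s t : autf s -> (forall x, t (s x) = x) -> (forall x, s (t x) = x) ->
    autf t.

Variable I : Type.   (* the index set alpha of the tuples *)

Definition strict_linear_order {J : Type} (lt : J -> J -> Prop) : Prop :=
  (forall x, ~ lt x x) /\ (forall x y z, lt x y -> lt y z -> lt x z) /\
  (forall x y, lt x y \/ x = y \/ lt y x).

Definition infinite_type (J : Type) : Prop :=
  exists f : nat -> J, forall x y, f x = f y -> x = y.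

Definition increasing {J : Type} (lt : J -> J -> Prop) {n : nat}
  (js : {k : nat | k < n} -> J) : Prop :=
  forall k l, proj1_sig k < proj1_sig l -> lt (js k) (js l).

Definition indiscernible {J : Type} (lt : J -> J -> Prop) (a : J -> I -> M) : Prop :=
  forall (n : nat) (js ks : {k : nat | k < n} -> J),
    increasing lt js -> increasing lt ks ->
    forall phi : formula S Empty_set ({k : nat | k < n} * I),
      sat M noparam phi (fun ki => a (js (fst ki)) (snd ki)) <->
      sat M noparam phi (fun ki => a (ks (fst ki)) (snd ki)).

Definition lascar_edge (a b : I -> M) : Prop :=
  ~ (forall i, a i = b i) /\
  exists (J : Type) (lt : J -> J -> Prop) (s : J -> I -> M),
    strict_linear_order lt /\ infinite_type J /\ indiscernible lt s /\
    (exists j, forall i, s j i = a i) /\ (exists j, forall i, s j i = b i).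

Definition lascar_equiv : (I -> M) -> (I -> M) -> Prop :=
  clos_refl_trans (I -> M) lascar_edge.

Definition lascar_class (C : (I -> M) -> Prop) : Prop :=
  exists a, forall b, C b <-> lascar_equiv a b.

Variable C : (I -> M) -> Prop.

Definition covers (phi : formula S M I) : Prop :=
  forall c, C c -> sat M (fun x => x) phi c.

Definition generic (phi : formula S M I) : Prop :=
  exists l : list (M -> M), (forall s, In s l -> autf s) /\
    covers (bigOr (map (fun s => fmap s phi) l)).

Definition consistent (p : formula S M I -> Prop) : Prop :=
  forall l : list (formula S M I), (forall phi, In phi l -> p phi) ->
    exists c : I -> M, forall phi, In phi l -> sat M (fun x => x) phi c.

Definition proper_wit (p : formula S M I -> Prop) (psi : formula S M I) : Prop :=
  consistent p /\ ~ generic psi /\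
  forall l : list (formula S M I), (forall phi, In phi l -> p phi) ->
    generic (fOr (bigAnd l) psi).

Definition proper (p : formula S M I -> Prop) : Prop :=
  exists psi, proper_wit p psi.

End Monster.

Arguments automorphism {S} M s.
Arguments elementary {S} M N e.
Arguments kappa_saturated {S} M K.
Arguments strongly_kappa_homogeneous {S} M K.
Arguments monster {S} M K.
Arguments fixes_small_model {S} M K s.
Arguments autf {S} M K _.
Arguments indiscernible {S} M I {J} lt a.
Arguments lascar_edge {S} M I a b.
Arguments lascar_equiv {S} M I _ _.
Arguments lascar_class {S} M I C.
Arguments covers {S} M I C phi.
Arguments generic {S} M K I C phi.
Arguments consistent {S} M I p.
Arguments proper_wit {S} M K I C p psi.
Arguments proper {S} M K I C p.

(* Automorphisms fixing a small model [N] preserve Lascar classes: [x] and its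
   image have the same type over [N], this type extends to an ultrafilter on
   tuples from [N], and a coheir sequence realizing its limit over [N, x, s x]
   is indiscernible after either [x] or [s x].  Hence [C] is [Aut f_L]-invariant
   and [C]-genericity is monotone under inclusion on [C].
   If no [p + phi_i] were proper, start from the non-generic witness
   [psi' \/ psi]; at stage [k] the witness [psi' \/ psi \/ \/_(i<k) (/\L /\ phi_i)]
   fails for [p + phi_k], which produces a conjunction from [p] that can be
   added to [L] keeping the next witness non-generic.  After [n] stages the
   covering hypothesis puts [/\L \/ psi], generic by properness of [p], inside
   a non-generic formula on [C]. *)

From Stdlib Require Import List Arith Lia Relations FinFun Cantor.
From Stdlib Require Import Classical FunctionalExtensionality PropExtensionality
  ClassicalEpsilon ProofIrrelevance.
From mathcomp Require filter.
Import ListNotations.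

Section Substitution.
Variable Sg : signature.

Fixpoint term_rename {P V W : Type} (f : V -> W) (t : term Sg P V) : term Sg P W :=
  match t with
  | @tvar _ _ _ x => tvar (f x)
  | @tpar _ _ _ c => tpar c
  | @tapp _ _ _ g args => tapp Sg P W g (fun k => term_rename f (args k))
  end.

Fixpoint term_subst {P V W : Type} (s : V -> term Sg P W) (t : term Sg P V) : term Sg P W :=
  match t with
  | @tvar _ _ _ x => s x
  | @tpar _ _ _ c => tpar c
  | @tapp _ _ _ g args => tapp Sg P W g (fun k => term_subst s (args k))
  end.

Definition subst_up {P V W : Type} (s : V -> term Sg P W) :
  option V -> term Sg P (option W) :=
  fun o => match o with None => tvar None | Some x => term_rename Some (s x) end.

Fixpoint formula_subst {P V : Type} (phi : formula Sg P V) :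
  forall W : Type, (V -> term Sg P W) -> formula Sg P W :=
  match phi in formula _ _ V0
    return forall W : Type, (V0 -> term Sg P W) -> formula Sg P W with
  | @fTrue _ _ _ => fun W _ => fTrue
  | @fFalse _ _ _ => fun W _ => fFalse
  | @fEq _ _ _ t1 t2 => fun W s => fEq Sg P W (term_subst s t1) (term_subst s t2)
  | @fRel _ _ _ r args => fun W s => fRel Sg P W r (fun k => term_subst s (args k))
  | @fNot _ _ _ a => fun W s => fNot Sg P W (formula_subst a W s)
  | @fAnd _ _ _ a b => fun W s => fAnd (formula_subst a W s) (formula_subst b W s)
  | @fOr _ _ _ a b => fun W s => fOr (formula_subst a W s) (formula_subst b W s)
  | @fAll _ _ _ a => fun W s => fAll Sg P W (formula_subst a (option W) (subst_up s))
  | @fEx _ _ _ a => fun W s => fEx Sg P W (formula_subst a (option W) (subst_up s))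
  end.

Variable M : structure Sg.

Lemma eval_term_rename {P V W} (pv : P -> M) (f : V -> W) (w : W -> M) t :
  eval_term Sg M pv w (term_rename f t) = eval_term Sg M pv (fun x => w (f x)) t.
Proof.
  induction t; simpl; auto. f_equal. apply functional_extensionality; auto.
Qed.

Lemma eval_term_subst {P V W} (pv : P -> M) (s : V -> term Sg P W) (w : W -> M) t :
  eval_term Sg M pv w (term_subst s t) =
  eval_term Sg M pv (fun x => eval_term Sg M pv w (s x)) t.
Proof.
  induction t; simpl; auto. f_equal. apply functional_extensionality; auto.
Qed.

Lemma extend_subst_up {P V W} (pv : P -> M) (s : V -> term Sg P W) (w : W -> M) m :
  (fun x => eval_term Sg M pv (extend Sg M w m) (subst_up s x)) =
  extend Sg M (fun x => eval_term Sg M pv w (s x)) m.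
Proof.
  apply functional_extensionality; intros [x|]; simpl; [|reflexivity].
  rewrite eval_term_rename; reflexivity.
Qed.

Lemma sat_formula_subst {P V} (pv : P -> M) (phi : formula Sg P V) :
  forall W (s : V -> term Sg P W) (w : W -> M),
  sat M pv (formula_subst phi W s) w <->
  sat M pv phi (fun x => eval_term Sg M pv w (s x)).
Proof.
  induction phi; intros W s w; simpl; try tauto.
  - rewrite !eval_term_subst; tauto.
  - replace (fun k => eval_term Sg M pv w (term_subst s (t k))) with
      (fun k => eval_term Sg M pv (fun x => eval_term Sg M pv w (s x)) (t k)); [tauto|].
    apply functional_extensionality; intro; symmetry; apply eval_term_subst.
  - rewrite IHphi; tauto.
  - rewrite IHphi1, IHphi2; tauto.
  - rewrite IHphi1, IHphi2; tauto.
  - split; intros H m; specialize (H m); rewrite IHphi, extend_subst_up in *; exact H.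
  - split; intros [m H]; exists m; rewrite IHphi, extend_subst_up in *; exact H.
Qed.

Lemma eval_term_tmap {P Q V} (g : P -> Q) (pv : Q -> M) (v : V -> M) t :
  eval_term Sg M pv v (tmap Sg g t) = eval_term Sg M (fun x => pv (g x)) v t.
Proof.
  induction t; simpl; auto. f_equal. apply functional_extensionality; auto.
Qed.

Lemma sat_fmap {P Q V} (g : P -> Q) (pv : Q -> M) (phi : formula Sg P V) :
  forall v, sat M pv (fmap g phi) v <-> sat M (fun x => pv (g x)) phi v.
Proof.
  induction phi; intro v; simpl; try tauto.
  - rewrite !eval_term_tmap; tauto.
  - replace (fun k => eval_term Sg M pv v (tmap Sg g (t k))) with
      (fun k => eval_term Sg M (fun x => pv (g x)) v (t k)); [tauto|].
    apply functional_extensionality; intro; symmetry; apply eval_term_tmap.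
  - rewrite IHphi; tauto.
  - rewrite IHphi1, IHphi2; tauto.
  - rewrite IHphi1, IHphi2; tauto.
  - split; intros H m; apply IHphi, H.
  - split; intros [m H]; exists m; apply IHphi, H.
Qed.

Lemma sat_bigAnd {P V} (pv : P -> M) (l : list (formula Sg P V)) v :
  sat M pv (bigAnd l) v <-> forall phi, In phi l -> sat M pv phi v.
Proof.
  induction l as [|a l IH]; simpl; [split; auto; intros _ _ []|].
  rewrite IH. split; [intros [Ha Hl] phi [<-|H]; auto|intros H; split; auto].
Qed.

Lemma sat_bigOr {P V} (pv : P -> M) (l : list (formula Sg P V)) v :
  sat M pv (bigOr l) v <-> exists phi, In phi l /\ sat M pv phi v.
Proof.
  induction l as [|a l IH]; simpl; [split; [intros []|intros [? [[] _]]]|].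
  rewrite IH. split; [intros [Ha|[phi [H1 H2]]]; eauto|intros [phi [[<-|H1] H2]]; eauto].
Qed.

Lemma eval_term_automorphism (s : M -> M) (hs : automorphism M s)
  {P V} (pv : P -> M) (v : V -> M) t :
  eval_term Sg M (fun x => s (pv x)) (fun x => s (v x)) t = s (eval_term Sg M pv v t).
Proof.
  destruct hs as [_ [Hf _]].
  induction t; simpl; auto. rewrite Hf. f_equal. apply functional_extensionality; auto.
Qed.

Lemma sat_automorphism (s : M -> M) (hs : automorphism M s)
  {P V} (pv : P -> M) (phi : formula Sg P V) :
  forall v, sat M (fun x => s (pv x)) phi (fun x => s (v x)) <-> sat M pv phi v.
Proof.
  pose proof hs as [[t [Hts Hst]] [_ Hr]].
  assert (Hext : forall V (v : V -> M) m,
    (fun x => s (extend Sg M v m x)) = extend Sg M (fun x => s (v x)) (s m)).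
  { intros V' v m; apply functional_extensionality; intros [x|]; reflexivity. }
  induction phi; intro v; simpl; try tauto.
  - rewrite !(eval_term_automorphism s hs). split; intro H; [|congruence].
    rewrite <- (Hts (eval_term Sg M pv v t0)), <- (Hts (eval_term Sg M pv v t1)), H; auto.
  - replace (fun k => eval_term Sg M (fun x => s (pv x)) (fun x => s (v x)) (t0 k)) with
      (fun k => s (eval_term Sg M pv v (t0 k))); [symmetry; apply Hr|].
    apply functional_extensionality; intro; symmetry; apply (eval_term_automorphism s hs).
  - rewrite IHphi; tauto.
  - rewrite IHphi1, IHphi2; tauto.
  - rewrite IHphi1, IHphi2; tauto.
  - split; intros H m.
    + apply IHphi. rewrite Hext. apply H.
    + rewrite <- (Hst m), <- Hext. apply IHphi, H.
  - split; intros [m H].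
    + exists (t m). apply IHphi. rewrite Hext, Hst. exact H.
    + exists (s m). rewrite <- Hext. apply IHphi, H.
Qed.

End Substitution.
Fixpoint fin_enum (n : nat) : list (Fin.t n) :=
  match n with 0 => [] | S n' => Fin.F1 :: map Fin.FS (fin_enum n') end.

Lemma in_fin_enum n (k : Fin.t n) : In k (fin_enum n).
Proof. induction k; simpl; auto using in_map. Qed.

Definition option_list {V : Type} (o : option V) : list V :=
  match o with Some x => [x] | None => [] end.

Section FreeVariables.
Variable Sg : signature.

Fixpoint term_fv {P V} (t : term Sg P V) : list V :=
  match t with
  | @tvar _ _ _ x => [x]
  | @tpar _ _ _ _ => []
  | @tapp _ _ _ g args => flat_map (fun k => term_fv (args k)) (fin_enum _)
  end.

Fixpoint formula_fv {P V} (phi : formula Sg P V) : list V :=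
  match phi in formula _ _ V0 return list V0 with
  | @fTrue _ _ _ | @fFalse _ _ _ => []
  | @fEq _ _ _ t1 t2 => term_fv t1 ++ term_fv t2
  | @fRel _ _ _ r args => flat_map (fun k => term_fv (args k)) (fin_enum _)
  | @fNot _ _ _ a => formula_fv a
  | @fAnd _ _ _ a b | @fOr _ _ _ a b => formula_fv a ++ formula_fv b
  | @fAll _ _ _ a | @fEx _ _ _ a => flat_map option_list (formula_fv a)
  end.

Variable M : structure Sg.

Lemma eval_term_ext_fv {P V} (pv : P -> M) (v w : V -> M) t :
  (forall x, In x (term_fv t) -> v x = w x) ->
  eval_term Sg M pv v t = eval_term Sg M pv w t.
Proof.
  induction t as [| |g args IHa]; simpl; intro Hv; auto.
  f_equal. apply functional_extensionality; intro k. apply IHa.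
  intros x Hx; apply Hv, in_flat_map. eauto using in_fin_enum.
Qed.

Lemma sat_ext_fv {P V} (pv : P -> M) (phi : formula Sg P V) :
  forall v w : V -> M, (forall x, In x (formula_fv phi) -> v x = w x) ->
  sat M pv phi v <-> sat M pv phi w.
Proof.
  assert (Hq : forall V (phi : formula Sg P (option V)) (v w : V -> M),
    (forall x, In x (flat_map option_list (formula_fv phi)) -> v x = w x) ->
    forall m x, In x (formula_fv phi) -> extend Sg M v m x = extend Sg M w m x).
  { intros V' phi' v w H m [x|] Hx; simpl; auto.
    apply H, in_flat_map. exists (Some x); simpl; auto. }
  induction phi; intros v w H; simpl in *; try tauto.
  - rewrite (eval_term_ext_fv pv v w t), (eval_term_ext_fv pv v w t0); try tauto;
      intros; apply H, in_or_app; auto.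
  - replace (fun k => eval_term Sg M pv v (t k)) with (fun k => eval_term Sg M pv w (t k));
      [tauto|].
    apply functional_extensionality; intro k; symmetry; apply eval_term_ext_fv.
    intros x Hx; apply H, in_flat_map; eauto using in_fin_enum.
  - rewrite (IHphi v w H); tauto.
  - rewrite (IHphi1 v w), (IHphi2 v w); try tauto; intros; apply H, in_or_app; auto.
  - rewrite (IHphi1 v w), (IHphi2 v w); try tauto; intros; apply H, in_or_app; auto.
  - assert (E : forall m, sat M pv phi (extend Sg M v m) <-> sat M pv phi (extend Sg M w m))
      by (intro; apply IHphi, Hq, H).
    split; intros H' m; apply E, H'.
  - assert (E : forall m, sat M pv phi (extend Sg M v m) <-> sat M pv phi (extend Sg M w m))
      by (intro; apply IHphi, Hq, H).
    split; intros [m H']; exists m; apply E, H'.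
Qed.

Section ExistentialClosure.
Context {P V : Type} (dec : forall x y : V, {x = y} + {x <> y}).

Definition update (v : V -> M) (x : V) (m : M) : V -> M :=
  fun y => if dec y x then m else v y.

Definition ex_close1 (x : V) (phi : formula Sg P V) : formula Sg P V :=
  fEx Sg P V (formula_subst Sg phi (option V)
    (fun y => if dec y x then tvar None else tvar (Some y))).

Lemma sat_ex_close1 pv x phi v :
  sat M pv (ex_close1 x phi) v <-> exists m, sat M pv phi (update v x m).
Proof.
  assert (E : forall m, (fun y => eval_term Sg M pv (extend Sg M v m)
                  (if dec y x then tvar None else tvar (Some y))) = update v x m).
  { intro m; apply functional_extensionality; intro y; unfold update.
    destruct (dec y x); reflexivity. }
  unfold ex_close1; simpl.
  split; intros [m H]; exists m; rewrite sat_formula_subst, E in *; exact H.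
Qed.

Definition ex_close (xs : list V) (phi : formula Sg P V) : formula Sg P V :=
  fold_right ex_close1 phi xs.

Lemma sat_ex_close pv xs phi : forall v,
  sat M pv (ex_close xs phi) v <->
  exists u, (forall y, ~ In y xs -> u y = v y) /\ sat M pv phi u.
Proof.
  induction xs as [|x xs IH]; intro v.
  - simpl; split; [intro H; exists v; auto|intros [u [Hu H]]].
    replace v with u; auto. apply functional_extensionality; intro; apply Hu; auto.
  - unfold ex_close; cbn [fold_right]; fold (ex_close xs phi). rewrite sat_ex_close1. split.
    + intros [m [u [Hu H]]%IH]. exists u; split; auto.
      intros y Hy. rewrite Hu by (intro; apply Hy; right; auto). unfold update.
      destruct (dec y x); [exfalso; apply Hy; left; auto|reflexivity].
    + intros [u [Hu H]]. exists (u x). apply IH. exists u; split; auto.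
      intros y Hy. unfold update. destruct (dec y x); subst; auto.
      apply Hu. intros [?|?]; auto.
Qed.

Lemma sat_ex_close_fv pv phi v :
  sat M pv (ex_close (formula_fv phi) phi) v <-> exists u, sat M pv phi u.
Proof.
  rewrite sat_ex_close. split; [intros [u [_ H]]; eauto|intros [u H]].
  exists (fun y => if in_dec dec y (formula_fv phi) then u y else v y). split.
  - intros y Hy; destruct (in_dec dec y (formula_fv phi)); tauto.
  - revert H; apply sat_ext_fv. intros x Hx. destruct (in_dec dec x (formula_fv phi)); tauto.
Qed.
End ExistentialClosure.
End FreeVariables.

Lemma card_lt_of_injective {A B K : Type} (f : A -> B) :
  Injective f -> card_lt B K -> card_lt A K.
Proof.
  intros hf [[g hg] hK]. split.
  - exists (fun a => g (f a)). intros x y E; apply hf, hg, E.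
  - intros [k hk]. apply hK. exists (fun x => f (k x)). intros x y E; apply hk, hf, E.
Qed.

Lemma card_lt_countable {A K : Type} :
  countable A -> card_lt (nat -> bool) K -> card_lt A K.
Proof.
  intros [code hcode]. apply (card_lt_of_injective (fun a k => Nat.eqb k (code a))).
  intros x y E. apply hcode.
  pose proof (f_equal (fun q => q (code x)) E) as Ex; simpl in Ex.
  rewrite Nat.eqb_refl in Ex. symmetry in Ex. apply Nat.eqb_eq in Ex; auto.
Qed.

Lemma countable_or_infinite (X : Type) : countable X \/ infinite_type X.
Proof.
  destruct (classic (forall l : list X, exists x, ~ In x l)) as [H|H].
  - right.
    set (fresh := fun l => proj1_sig (constructive_indefinite_description _ (H l))).
    assert (Hfresh : forall l, ~ In (fresh l) l)
      by (intro l; exact (proj2_sig (constructive_indefinite_description _ (H l)))).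
    set (F := fix F n := match n with 0 => [] | S n => fresh (F n) :: F n end).
    assert (Hin : forall m n, m < n -> In (fresh (F m)) (F n)).
    { intros m n; induction n; intro Hmn; [lia|]. simpl.
      destruct (Nat.eq_dec m n); [subst; left; auto|right; apply IHn; lia]. }
    exists (fun n => fresh (F n)).
    intros m n E. destruct (Nat.lt_trichotomy m n) as [h|[h|h]]; auto.
    + exfalso; apply (Hfresh (F n)); rewrite <- E; apply Hin; auto.
    + exfalso; apply (Hfresh (F m)); rewrite E; apply Hin; auto.
  - left. apply not_all_ex_not in H. destruct H as [l Hl].
    assert (Hpos : forall x, exists n, nth_error l n = Some x).
    { intro x. apply In_nth_error, NNPP. intro h; apply Hl; eauto. }
    exists (fun x => proj1_sig (constructive_indefinite_description _ (Hpos x))).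
    intros x y E.
    destruct (constructive_indefinite_description _ (Hpos x)) as [n Hn].
    destruct (constructive_indefinite_description _ (Hpos y)) as [n' Hn'].
    simpl in E; subst. congruence.
Qed.

(* Hilbert's hotel: the even places of a copy of nat inside X are freed for X itself. *)
Lemma infinite_absorbs_countable {X Y : Type} :
  infinite_type X -> countable Y -> exists f : X + Y -> X, Injective f.
Proof.
  intros [f hf] [h hh].
  set (g := fun s : X + Y =>
      match s with
      | inl x => match excluded_middle_informative (exists k, f k = x) with
                 | left H => f (2 * proj1_sig (constructive_indefinite_description _ H))
                 | right _ => x end
      | inr y => f (2 * h y + 1) end).
  exists g. intros [x|y] [x'|y'] E; simpl in E.
  - destruct (excluded_middle_informative (exists k, f k = x)) as [H|H];
    destruct (excluded_middle_informative (exists k, f k = x')) as [H'|H'].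
    + destruct (constructive_indefinite_description _ H) as [k <-].
      destruct (constructive_indefinite_description _ H') as [k' <-].
      apply hf in E. simpl in E. do 2 f_equal. lia.
    + exfalso; apply H'; eauto.
    + exfalso; apply H; eauto.
    + subst; auto.
  - destruct (excluded_middle_informative (exists k, f k = x)) as [H|H].
    + destruct (constructive_indefinite_description _ H). apply hf in E; lia.
    + exfalso; apply H; eauto.
  - destruct (excluded_middle_informative (exists k, f k = x')) as [H|H].
    + destruct (constructive_indefinite_description _ H). apply hf in E; lia.
    + exfalso; apply H; eauto.
  - apply hf in E. f_equal. apply hh. lia.
Qed.

Lemma card_lt_sum_countable (X Y K : Type) :
  card_lt (nat -> bool) K -> card_lt X K -> countable Y -> card_lt (X + Y) K.
Proof.
  intros hB hX hY.
  destruct (countable_or_infinite X) as [[cX hcX]|hinf].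
  - destruct hY as [cY hcY]. apply card_lt_countable; auto.
    exists (fun s => match s with inl x => 2 * cX x | inr y => 2 * cY y + 1 end).
    intros [x|y] [x'|y'] E; try lia; f_equal; [apply hcX|apply hcY]; lia.
  - destruct (infinite_absorbs_countable hinf hY) as [f hf].
    exact (card_lt_of_injective f hf hX).
Qed.

Lemma list_choice {A B : Type} (R : A -> B -> Prop) (xs : list A) :
  (forall x, In x xs -> exists y, R x y) ->
  exists ys, (forall x, In x xs -> exists y, In y ys /\ R x y) /\
             (forall y, In y ys -> exists x, In x xs /\ R x y).
Proof.
  induction xs as [|x xs IH]; intro H; [exists []; split; intros _ []|].
  destruct IH as [ys [H1 H2]]; [intros; apply H; right; auto|].
  destruct (H x (or_introl eq_refl)) as [y Hy].
  exists (y :: ys); split.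
  - intros x' [<-|Hx']; [exists y; simpl; auto|].
    destruct (H1 x' Hx') as [y' [? ?]]; exists y'; simpl; auto.
  - intros y' [<-|Hy']; [exists x; simpl; auto|].
    destruct (H2 y' Hy') as [x' [? ?]]; exists x'; simpl; auto.
Qed.

Section CountableTypes.
Variables (Sg : signature) (M : structure Sg) (K : Type).
Hypothesis hsat : kappa_saturated M K.
Hypothesis hB : card_lt (nat -> bool) K.
Variables (I : Type) (code : I -> nat) (m0 : M).
Hypothesis hcode : Injective code.

Definition code_eq_dec (x y : I) : {x = y} + {x <> y} :=
  match Nat.eq_dec (code x) (code y) with
  | left h => left (hcode _ _ h)
  | right h => right (fun e => h (f_equal code e))
  end.

Variables (X : Type) (f : X -> M) (p : formula Sg X I -> Prop).
Hypothesis hX : card_lt X K.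
Hypothesis hfin : forall l, (forall phi, In phi l -> p phi) ->
  exists v, forall phi, In phi l -> sat M f phi v.

Definition extendable_below (k : nat) (w : I -> M) : Prop :=
  forall l, (forall phi, In phi l -> p phi) ->
  exists v, (forall i, code i < k -> v i = w i) /\ sat M f (bigAnd l) v.

Lemma extendable_below_0 w : extendable_below 0 w.
Proof.
  intros l Hl. destruct (hfin l Hl) as [v Hv].
  exists v; split; [intros; lia|apply sat_bigAnd; auto].
Qed.

Definition vars_above (k : nat) (l : list (formula Sg X I)) : list I :=
  filter (fun j => k <? code j) (formula_fv Sg (bigAnd l)).

Lemma in_vars_above k l y : In y (vars_above k l) <-> In y (formula_fv Sg (bigAnd l)) /\ k < code y.
Proof. unfold vars_above. rewrite filter_In, Nat.ltb_lt. tauto. Qed.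

Section Step.
Variables (k : nat) (w : I -> M) (i : I).
Hypothesis hi : code i = k.

(* [bigAnd l] with the variables above [i] quantified away, [i] as the free
   variable and the variables below [i] replaced by their [w]-values. *)
Definition pin_at (l : list (formula Sg X I)) : formula Sg (X + I) unit :=
  formula_subst Sg (fmap inl (ex_close Sg code_eq_dec (vars_above k l) (bigAnd l))) unit
    (fun j => if code_eq_dec j i then tvar tt else tpar (inr j)).

Definition step_params (s : X + I) : M :=
  match s with inl x => f x | inr j => w j end.

Lemma sat_pin_at l m :
  sat M step_params (pin_at l) (fun _ => m) <->
  exists u, (forall y, ~ In y (vars_above k l) -> u y = update Sg M code_eq_dec w i m y) /\
            sat M f (bigAnd l) u.
Proof.
  unfold pin_at. rewrite sat_formula_subst, sat_fmap.
  replace (fun j => eval_term Sg M step_params (fun _ => m)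
                      (if code_eq_dec j i then tvar tt else tpar (inr j)))
    with (update Sg M code_eq_dec w i m); [apply sat_ex_close|].
  apply functional_extensionality; intro j. unfold update.
  destruct (code_eq_dec j i); reflexivity.
Qed.

Lemma pin_at_finitely_satisfiable : extendable_below k w ->
  forall gs, (forall g, In g gs -> exists l, (forall phi, In phi l -> p phi) /\ g = pin_at l) ->
  exists m, forall g, In g gs -> sat M step_params g (fun _ => m).
Proof.
  intros Hw gs Hgs.
  destruct (list_choice (fun g l => (forall phi, In phi l -> p phi) /\ g = pin_at l) gs Hgs)
    as [ls [Hls1 Hls2]].
  destruct (Hw (concat ls)) as [v [Hv Hsat]].
  { intros phi [l [Hl Hphi]]%in_concat.
    destruct (Hls2 l Hl) as [g [_ [Hp _]]]. auto. }
  exists (v i). intros g Hg. destruct (Hls1 g Hg) as [l [Hl [_ ->]]].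
  apply sat_pin_at.
  exists (fun y => if in_dec code_eq_dec y (vars_above k l) then v y
                   else update Sg M code_eq_dec w i (v i) y). split.
  - intros y Hy. destruct (in_dec code_eq_dec y (vars_above k l)); tauto.
  - apply (sat_ext_fv Sg M f (bigAnd l) v).
    + intros x Hx. destruct (in_dec code_eq_dec x (vars_above k l)) as [h|h]; auto.
      unfold update. destruct (code_eq_dec x i) as [->|hxi]; auto.
      assert (code x <> k) by (intro E; apply hxi, hcode; congruence).
      assert (code x <= k) by (apply Nat.nlt_ge; intro; apply h, in_vars_above; auto).
      apply Hv. lia.
    + rewrite sat_bigAnd in Hsat |- *. intros phi Hphi. apply Hsat, in_concat; eauto.
Qed.

End Step.

Lemma extendable_below_succ k w : extendable_below k w ->
  exists w', extendable_below (S k) w' /\ forall i, code i < k -> w' i = w i.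
Proof.
  intro Hw.
  destruct (classic (exists i, code i = k)) as [[i Hi]|Hno].
  2:{ exists w; split; auto. intros l Hl. destruct (Hw l Hl) as [v [Hv1 Hv2]].
      exists v; split; auto. intros j Hj. apply Hv1.
      destruct (Nat.eq_dec (code j) k); [exfalso; apply Hno; eauto|lia]. }
  assert (HXI : card_lt (X + I) K) by (apply card_lt_sum_countable; auto; exists code; auto).
  destruct (hsat (X + I)%type (step_params w) HXI
              (fun g => exists l, (forall phi, In phi l -> p phi) /\ g = pin_at k i l)
              (pin_at_finitely_satisfiable k w i Hi Hw)) as [m Hm].
  exists (update Sg M code_eq_dec w i m). split.
  - intros l Hl. destruct (proj1 (sat_pin_at k w i l m) (Hm _ (ex_intro _ l (conj Hl eq_refl))))
      as [u [Hu1 Hu2]].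
    exists u. split; auto.
    intros j Hj. apply Hu1. intros [_ H]%in_vars_above. lia.
  - intros j Hj. unfold update. destruct (code_eq_dec j i); [subst; lia|auto].
Qed.

Definition next_partial k (w : {w | extendable_below k w}) :
  {w' | extendable_below (S k) w' /\ forall i, code i < k -> w' i = proj1_sig w i} :=
  constructive_indefinite_description _ (extendable_below_succ k _ (proj2_sig w)).

Fixpoint partial_realization (k : nat) : {w | extendable_below k w} :=
  match k with
  | 0 => exist _ (fun _ => m0) (extendable_below_0 _)
  | S k' => let w := next_partial k' (partial_realization k') in
            exist _ (proj1_sig w) (proj1 (proj2_sig w))
  end.

Lemma partial_realization_stable j k : code j < k ->
  proj1_sig (partial_realization k) j = proj1_sig (partial_realization (S (code j))) j.
Proof.
  induction k as [|k IH]; intro h; [lia|].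
  destruct (Nat.eq_dec (code j) k) as [<-|e]; [reflexivity|].
  rewrite <- IH by lia. simpl. apply (proj2_sig (next_partial k _)). lia.
Qed.

Theorem realize_countable_type : exists v, forall phi, p phi -> sat M f phi v.
Proof.
  exists (fun j => proj1_sig (partial_realization (S (code j))) j). intros phi Hphi.
  set (k := S (list_max (map code (formula_fv Sg phi)))).
  destruct (proj2_sig (partial_realization k) [phi]) as [v [Hv Hs]].
  { intros q [<-|[]]; auto. }
  apply (proj1 (sat_bigAnd Sg M f [phi] v)) with (phi := phi) in Hs; [|left; auto].
  revert Hs; apply sat_ext_fv. intros x Hx.
  assert (code x < k).
  { pose proof (proj1 (list_max_le (map code (formula_fv Sg phi)) _) (le_n _)) as Hmax.
    rewrite Forall_forall in Hmax. apply Nat.lt_succ_r, Hmax, in_map, Hx. }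
  rewrite Hv by auto. symmetry; apply partial_realization_stable; auto.
Qed.

End CountableTypes.

Record ultrafilter {T : Type} (U : (T -> Prop) -> Prop) : Prop := {
  uf_and : forall A B, U A -> U B -> U (fun x => A x /\ B x);
  uf_nonempty : forall A, U A -> exists x, A x;
  uf_complete : forall A, U A \/ U (fun x => ~ A x);
  uf_mono : forall A B, (forall x, A x -> B x) -> U A -> U B }.

Lemma ultrafilter_extending {T : Type} (B : (T -> Prop) -> Prop) :
  (forall l, (forall A, In A l -> B A) -> exists x, forall A, In A l -> A x) ->
  exists U, ultrafilter U /\ forall A, B A -> U A.
Proof.
  intro hB.
  set (F := fun A : T -> Prop => exists l, (forall X, In X l -> B X) /\
                                 forall x, (forall X, In X l -> X x) -> A x).
  assert (FF : filter.ProperFilter F).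
  { constructor.
    - intros [l [Hl H]]. destruct (hB l Hl) as [x Hx]. exact (H x Hx).
    - constructor.
      + exists []. split; [intros _ []|]. intros; exact I.
      + intros A A' [l [Hl H]] [l' [Hl' H']]. exists (l ++ l'). split.
        * intros X HX; apply in_app_or in HX; destruct HX; auto.
        * intros x Hx. split; [apply H|apply H']; intros; apply Hx, in_or_app; auto.
      + intros A A' HAA [l [Hl H]]. exists l; split; [auto|]. intros x Hx; apply HAA, H, Hx. }
  destruct (filter.ultraFilterLemma FF) as [U [UU sFU]].
  exists U. split; [constructor|].
  - intros A A' HA HA'. exact (@filter.filterI _ U _ A A' HA HA').
  - intros A HA. apply NNPP. intro h. apply (@filter.filter_not_empty _ U _).
    replace classical_sets.set0 with A; auto.
    apply functional_extensionality; intro x; apply propositional_extensionality.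
    split; [intro hx; apply h; eauto|intros []].
  - intro A. exact (filter.in_ultra_setVsetC A UU).
  - intros A A' H HA. exact (@filter.filterS _ U _ A A' H HA).
  - intros A HA. apply sFU. exists [A]. split; [intros X [<-|[]]; auto|].
    intros x Hx; apply Hx; left; auto.
Qed.

Lemma uf_all {T : Type} (U : (T -> Prop) -> Prop) : ultrafilter U ->
  forall l, (forall A, In A l -> U A) -> U (fun x => forall A, In A l -> A x).
Proof.
  intros hU l. induction l as [|A l IH]; intro Hl.
  - destruct (uf_complete U hU (fun _ => False)) as [h|h].
    + destruct (uf_nonempty U hU _ h) as [_ []].
    + revert h; apply (uf_mono U hU). intros _ _ _ [].
  - apply (uf_mono U hU (fun x => A x /\ forall A', In A' l -> A' x)).
    + intros x [h1 h2] A' [<-|h]; [exact h1|exact (h2 A' h)].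
    + apply (uf_and U hU); [apply Hl; left; auto|apply IH; intros; apply Hl; right; auto].
Qed.

Lemma lascar_edge_sym {Sg : signature} (M : structure Sg) (I : Type) x y :
  lascar_edge M I x y -> lascar_edge M I y x.
Proof.
  intros [h [J [lt' [s [h1 [h2 [h3 [[j1 hj1] [j2 hj2]]]]]]]]].
  split; [intro h'; apply h; intro i; auto|].
  exists J, lt', s. split; [auto|split; [auto|split; [auto|split]]]; eauto.
Qed.

Lemma lascar_equiv_sym {Sg : signature} (M : structure Sg) (I : Type) x y :
  lascar_equiv M I x y -> lascar_equiv M I y x.
Proof.
  induction 1; [apply rt_step, lascar_edge_sym; auto|apply rt_refl|eapply rt_trans; eauto].
Qed.

Section Coheirs.
Variables (Sg : signature) (M : structure Sg) (K : Type).
Hypothesis hsat : kappa_saturated M K.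
Hypothesis hB : card_lt (nat -> bool) K.
Variables (I : Type) (code : I -> nat) (m0 : M).
Hypothesis hcode : Injective code.
Variables (N : structure Sg) (e : N -> M).
Hypothesis he : elementary M N e.
Hypothesis hNK : card_lt N K.

Lemma elementary_formula {V} (phi : formula Sg N V) (n : V -> N) :
  sat N (fun c => c) phi n <-> sat M e phi (fun x => e (n x)).
Proof.
  pose proof (he (formula_subst Sg phi Empty_set (fun x => tpar (n x)))) as H.
  rewrite !sat_formula_subst in H. exact H.
Qed.

Lemma elementary_inhabited : inhabited N.
Proof.
  assert (H : sat M e (fEx Sg N Empty_set (@fTrue Sg N (option Empty_set))) noparam)
    by (exists m0; simpl; trivial).
  apply he in H. destruct H as [n0 _]. exact (inhabits n0).
Qed.

Definition trace {X} (f : X -> M) (phi : formula Sg X I) : (I -> N) -> Prop :=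
  fun n => sat M f phi (fun i => e (n i)).

(* The type of [a] over [N] is finitely satisfiable in [N]. *)
Lemma ultrafilter_of_type (a : I -> M) :
  exists U, ultrafilter U /\ forall phi, sat M e phi a -> U (trace e phi).
Proof.
  enough (H : exists U, ultrafilter U /\
            forall A, (exists phi, sat M e phi a /\ A = trace e phi) -> U A).
  { destruct H as [U [hU HU]]. exists U; split; eauto. }
  apply ultrafilter_extending. intros l Hl.
  destruct (list_choice (fun A phi => sat M e phi a /\ A = trace e phi) l Hl)
    as [phis [H1 H2]].
  destruct elementary_inhabited as [n0].
  set (psi := bigAnd phis).
  assert (Hpsi : sat M e psi a).
  { apply sat_bigAnd. intros phi Hphi. destruct (H2 phi Hphi) as [A [_ [? _]]]; auto. }
  assert (Hc : sat M e (ex_close Sg (code_eq_dec I code hcode) (formula_fv Sg psi) psi)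
                 (fun _ => e n0)) by (apply sat_ex_close_fv; eauto).
  apply (elementary_formula _ (fun _ => n0)), sat_ex_close_fv in Hc.
  destruct Hc as [u Hu%elementary_formula].
  exists u. intros A HA. destruct (H1 A HA) as [phi [Hphi [_ ->]]].
  exact (proj1 (sat_bigAnd Sg M e phis _) Hu phi Hphi).
Qed.

Variable U : ((I -> N) -> Prop) -> Prop.
Hypothesis hU : ultrafilter U.

Lemma uf_iff (A B : (I -> N) -> Prop) : (forall n, A n <-> B n) -> U A <-> U B.
Proof. intro H. split; apply (uf_mono U hU); intro n; apply H. Qed.

(* [c] realizes the limit type of [U] over the parameters [f]. *)
Definition averages {X} (f : X -> M) (c : I -> M) : Prop :=
  forall phi : formula Sg X I, U (trace f phi) -> sat M f phi c.

Lemma averages_iff {X} (f : X -> M) c : averages f c ->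
  forall phi, sat M f phi c <-> U (trace f phi).
Proof.
  intros Hc phi. split; [intro Hs|apply Hc].
  destruct (uf_complete U hU (trace f phi)) as [h|h]; auto.
  destruct (Hc (fNot Sg X I phi) h Hs).
Qed.

Lemma averages_fmap {X Y} (g : X -> Y) (f : Y -> M) c :
  averages f c -> averages (fun x => f (g x)) c.
Proof.
  intros Hc phi Hphi. apply sat_fmap, Hc.
  revert Hphi; apply (uf_mono U hU). intro n. unfold trace. rewrite sat_fmap. auto.
Qed.

Lemma averages_of_type (a : I -> M) :
  (forall phi, sat M e phi a -> U (trace e phi)) -> averages e a.
Proof.
  intros Ha phi Hphi. apply NNPP. intro Hn.
  destruct (uf_nonempty U hU _ (uf_and U hU _ _ Hphi (Ha (fNot Sg N I phi) Hn))) as [n [h1 h2]].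
  exact (h2 h1).
Qed.

Lemma average_exists {X} (f : X -> M) : card_lt X K -> exists c, averages f c.
Proof.
  intro hX. apply (realize_countable_type Sg M K hsat hB I code m0 hcode X f); auto.
  intros l Hl.
  assert (Hl' : forall A, In A (map (trace f) l) -> U A)
    by (intros A [phi [<- Hphi]]%in_map_iff; auto).
  destruct (uf_nonempty U hU _ (uf_all U hU _ Hl')) as [n Hn].
  exists (fun i => e (n i)). intros phi Hphi. apply (Hn (trace f phi)), in_map, Hphi.
Qed.

Section Morley.
Variable s : nat -> I -> M.

(* Parameters [N] together with the terms [s 0, ..., s m]; indices above [m]
   are clamped to [m] so that no later term is mentioned. *)
Definition prefix_params (m : nat) (q : N + nat * I) : M :=
  match q with inl x => e x | inr (j, i) => s (Nat.min j m) i end.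

Hypothesis avg0 : averages e (s 0).
Hypothesis avgS : forall m, averages (prefix_params m) (s (S m)).

Lemma averages_morley m : averages e (s m).
Proof. destruct m; [exact avg0|exact (averages_fmap inl (prefix_params m) _ (avgS m))]. Qed.

Definition tuple_val (n : nat) (G : nat -> I -> M) : {k | k < n} * I -> M :=
  fun ki => G (proj1_sig (fst ki)) (snd ki).

Definition increasing_below (n : nat) (js : nat -> nat) : Prop :=
  forall k l, k < l -> l < n -> js k < js l.

Definition indiscernible_below (n : nat) : Prop :=
  forall js, increasing_below n js -> forall phi : formula Sg N ({k | k < n} * I),
    sat M e phi (tuple_val n (fun k => s (js k))) <-> sat M e phi (tuple_val n s).

Lemma indiscernible_below_0 : indiscernible_below 0.
Proof.
  intros js _ phi. replace (tuple_val 0 (fun k => s (js k))) with (tuple_val 0 s); [tauto|].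
  apply functional_extensionality; intros [[k h] i]; lia.
Qed.

Lemma indiscernible_below_1 : indiscernible_below 1.
Proof.
  assert (H1 : forall j (phi : formula Sg N ({k | k < 1} * I)),
    sat M e phi (tuple_val 1 (fun _ => s j)) <->
    U (trace e (formula_subst Sg phi I (fun ki => tvar (snd ki))))).
  { intros j phi. rewrite <- (averages_iff _ _ (averages_morley j)), sat_formula_subst.
    reflexivity. }
  intros js _ phi.
  replace (tuple_val 1 (fun k => s (js k))) with (tuple_val 1 (fun _ => s (js 0))).
  2:{ apply functional_extensionality; intros [[k h] i]. unfold tuple_val; simpl.
      replace k with 0 by lia. reflexivity. }
  replace (tuple_val 1 s) with (tuple_val 1 (fun _ => s 0)).
  2:{ apply functional_extensionality; intros [[k h] i]. unfold tuple_val; simpl.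
      replace k with 0 by lia. reflexivity. }
  rewrite !H1. reflexivity.
Qed.

Section Step.
Variable n : nat.
Hypothesis IH : indiscernible_below n.
Variable phi : formula Sg N ({k | k < S n} * I).

Definition tuple_snoc (G : nat -> I -> M) (w : I -> M) : {k | k < S n} * I -> M :=
  fun ki => if lt_dec (proj1_sig (fst ki)) n then G (proj1_sig (fst ki)) (snd ki)
            else w (snd ki).

Definition freeze_front (js : nat -> nat) : formula Sg (N + nat * I) I :=
  formula_subst Sg (fmap inl phi) I (fun ki =>
    if lt_dec (proj1_sig (fst ki)) n then tpar (inr (js (proj1_sig (fst ki)), snd ki))
    else tvar (snd ki)).

Definition freeze_last (n' : I -> N) : formula Sg N ({k | k < n} * I) :=
  formula_subst Sg phi ({k | k < n} * I) (fun ki =>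
    match lt_dec (proj1_sig (fst ki)) n with
    | left h => tvar (exist _ (proj1_sig (fst ki)) h, snd ki)
    | right _ => tpar (n' (snd ki))
    end).

Lemma sat_freeze_front js m w : (forall k, k < n -> js k <= m) ->
  sat M (prefix_params m) (freeze_front js) w <->
  sat M e phi (tuple_snoc (fun k => s (js k)) w).
Proof.
  intro hjs. unfold freeze_front. rewrite sat_formula_subst, sat_fmap.
  match goal with |- sat _ _ _ ?v <-> _ => replace v with (tuple_snoc (fun k => s (js k)) w) end;
    [reflexivity|].
  apply functional_extensionality; intros [[k h] i]. unfold tuple_snoc; simpl.
  destruct (lt_dec k n) as [h'|h']; simpl; [|reflexivity].
  rewrite Nat.min_l by auto. reflexivity.
Qed.

Lemma sat_freeze_last n' G :
  sat M e (freeze_last n') (tuple_val n G) <-> sat M e phi (tuple_snoc G (fun i => e (n' i))).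
Proof.
  unfold freeze_last. rewrite sat_formula_subst.
  match goal with |- sat _ _ _ ?v <-> _ => replace v with (tuple_snoc G (fun i => e (n' i))) end;
    [reflexivity|].
  apply functional_extensionality; intros [[k h] i]. unfold tuple_snoc; simpl.
  destruct (lt_dec k n); reflexivity.
Qed.

(* The last term of an increasing tuple is some [s (S m)], which averages over
   the earlier ones: the truth of [phi] depends only on the [U]-limit. *)
Lemma sat_increasing_tuple js : 1 <= n -> increasing_below (S n) js ->
  sat M e phi (tuple_val (S n) (fun k => s (js k))) <->
  U (fun n' => sat M e (freeze_last n') (tuple_val n s)).
Proof.
  intros hn hjs.
  assert (hpos : js 0 < js n) by (apply hjs; lia).
  destruct (js n) as [|m] eqn:Hm; [lia|].
  assert (hle : forall k, k < n -> js k <= m).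
  { intros k hk. assert (js k < js n) by (apply hjs; lia). lia. }
  replace (tuple_val (S n) (fun k => s (js k))) with (tuple_snoc (fun k => s (js k)) (s (S m))).
  2:{ apply functional_extensionality; intros [[k h] i]. unfold tuple_snoc, tuple_val; simpl.
      destruct (lt_dec k n); [reflexivity|]. replace k with n by lia. rewrite Hm. reflexivity. }
  rewrite <- (sat_freeze_front js m _ hle), (averages_iff _ _ (avgS m)).
  apply uf_iff. intro n'. unfold trace.
  rewrite sat_freeze_front, <- sat_freeze_last by auto.
  rewrite (IH js); [reflexivity|intros k l hkl hl; apply hjs; lia].
Qed.

End Step.

Lemma indiscernible_below_all n : indiscernible_below n.
Proof.
  induction n as [|n IHn]; [exact indiscernible_below_0|].
  destruct n as [|n]; [exact indiscernible_below_1|].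
  intros js hjs phi.
  assert (hid : increasing_below (S (S n)) (fun k => k)) by (intros k l; lia).
  rewrite (sat_increasing_tuple _ IHn phi js), (sat_increasing_tuple _ IHn phi _ ltac:(lia) hid)
    by (auto; lia).
  reflexivity.
Qed.

Lemma morley_indiscernible : indiscernible M I (J := nat) lt s.
Proof.
  intros n js ks hjs hks phi.
  set (ext := fun (fs : {k | k < n} -> nat) (k : nat) =>
         match lt_dec k n with left h => fs (exist _ k h) | right _ => 0 end).
  assert (Hext : forall fs, (fun ki : {k | k < n} * I => s (fs (fst ki)) (snd ki)) =
                           tuple_val n (fun k => s (ext fs k))).
  { intro fs. apply functional_extensionality; intros [[k h] i]. unfold tuple_val, ext; simpl.
    destruct (lt_dec k n) as [h'|h']; [|contradiction].
    rewrite (proof_irrelevance _ h h'). reflexivity. }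
  assert (Hinc : forall fs, increasing lt fs -> increasing_below n (ext fs)).
  { intros fs hfs k l hkl hl. unfold ext.
    destruct (lt_dec k n) as [h1|h1]; [|lia]. destruct (lt_dec l n) as [h2|h2]; [|lia].
    apply hfs. simpl. auto. }
  assert (Hnp : forall v, sat M noparam phi v <-> sat M e (fmap noparam phi) v).
  { intro v. rewrite sat_fmap.
    replace (fun x : Empty_set => e (noparam x)) with (@noparam M); [reflexivity|].
    apply functional_extensionality; intros []. }
  rewrite !Hnp, !Hext, (indiscernible_below_all n _ (Hinc js hjs)),
    (indiscernible_below_all n _ (Hinc ks hks)).
  reflexivity.
Qed.

Lemma morley_lascar_equiv : lascar_equiv M I (s 0) (s 1).
Proof.
  destruct (classic (forall i, s 0 i = s 1 i)) as [h|h].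
  - replace (s 1) with (s 0); [apply rt_refl|]. apply functional_extensionality; auto.
  - apply rt_step. split; auto.
    exists nat, lt, s. split; [|split; [|split; [apply morley_indiscernible|split]]].
    + split; [|split]; intros; lia.
    + exists (fun k => k); auto.
    + exists 0; auto.
    + exists 1; auto.
Qed.

End Morley.

Section CoheirSequence.
Variables (a b : I -> M).
Hypothesis ha : averages e a.
Hypothesis hb : averages e b.

Definition history (cs : nat -> I -> M) (j : nat) : I -> M :=
  match j with 0 => a | 1 => b | S (S j') => cs j' end.

Definition history_params (cs : nat -> I -> M) (q : N + nat * I) : M :=
  match q with inl x => e x | inr (j, i) => history cs j i end.

Lemma card_history_params : card_lt (N + nat * I) K.
Proof.
  apply card_lt_sum_countable; auto.
  exists (fun q => Cantor.to_nat (fst q, code (snd q))). intros [j i] [j' i'] E.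
  apply (f_equal Cantor.of_nat) in E. rewrite !Cantor.cancel_of_to in E.
  inversion E. f_equal. apply hcode; auto.
Qed.

Definition next_coheir (cs : nat -> I -> M) : I -> M :=
  proj1_sig (constructive_indefinite_description _
    (average_exists (history_params cs) card_history_params)).

Lemma next_coheir_averages cs : averages (history_params cs) (next_coheir cs).
Proof. exact (proj2_sig (constructive_indefinite_description _ _)). Qed.

(* [coheir_prefix k] lists the first [k] terms of the sequence (junk beyond). *)
Fixpoint coheir_prefix (k : nat) : nat -> I -> M :=
  match k with
  | 0 => fun _ => a
  | S k' => fun j => if Nat.eq_dec j k' then next_coheir (coheir_prefix k')
                     else coheir_prefix k' j
  end.

Definition coheir (k : nat) : I -> M := next_coheir (coheir_prefix k).

Lemma coheir_prefix_coheir k j : j < k -> coheir_prefix k j = coheir j.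
Proof.
  induction k; intro h; [lia|]. simpl. destruct (Nat.eq_dec j k); [subst; auto|].
  apply IHk; lia.
Qed.

(* The sequence [a, c 0, c 1, ...] for [ix = 0], and [b, c 0, c 1, ...] for [ix = 1]. *)
Definition history_index (ix j : nat) : nat :=
  match j with 0 => ix | S j' => S (S j') end.

Definition morley_from (ix : nat) (j : nat) : I -> M := history coheir (history_index ix j).

Lemma morley_from_averages ix m : ix < 2 ->
  averages (prefix_params (morley_from ix) m) (morley_from ix (S m)).
Proof.
  intro hix.
  set (rho := fun q : N + nat * I => match q with
              | inl x => inl x
              | inr (j, i) => inr (history_index ix (Nat.min j m), i) end).
  replace (prefix_params (morley_from ix) m)
    with (fun q => history_params (coheir_prefix m) (rho q)).
  { apply averages_fmap, next_coheir_averages. }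
  apply functional_extensionality; intros [x|[j i]]; [reflexivity|]. simpl.
  unfold morley_from. destruct (Nat.min j m) as [|j'] eqn:Hj; simpl.
  - destruct ix as [|[|]]; simpl; auto; lia.
  - rewrite coheir_prefix_coheir; [reflexivity|lia].
Qed.

Lemma coheir_lascar_equiv : lascar_equiv M I a b.
Proof.
  assert (Hlascar : forall ix, ix < 2 -> averages e (history coheir ix) ->
            lascar_equiv M I (history coheir ix) (coheir 0)).
  { intros ix hix h0. exact (morley_lascar_equiv (morley_from ix) h0
                               (fun m => morley_from_averages ix m hix)). }
  eapply rt_trans; [apply (Hlascar 0)|apply lascar_equiv_sym, (Hlascar 1)]; auto.
Qed.

End CoheirSequence.
End Coheirs.

Section Automorphisms.
Variables (Sg : signature) (M : structure Sg).

Lemma automorphism_id : automorphism M (fun x => x).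
Proof. split; [exists (fun x => x); auto|split; [reflexivity|tauto]]. Qed.

Lemma automorphism_comp s t :
  automorphism M s -> automorphism M t -> automorphism M (fun x => s (t x)).
Proof.
  intros [[s' [hs1 hs2]] [hsf hsr]] [[t' [ht1 ht2]] [htf htr]].
  split; [exists (fun x => t' (s' x)); split; intro x; congruence|split].
  - intros f args. rewrite htf, hsf. reflexivity.
  - intros r args. rewrite htr, (hsr r (fun k => t (args k))). reflexivity.
Qed.

Lemma automorphism_inverse s t : automorphism M s ->
  (forall x, t (s x) = x) -> (forall x, s (t x) = x) -> automorphism M t.
Proof.
  intros [_ [hf hr]] hts hst. split; [exists s; auto|split].
  - intros f args. transitivity (t (s (finterp M f (fun k => t (args k))))); [|apply hts].
    f_equal. rewrite hf. f_equal. apply functional_extensionality; intro k; auto.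
  - intros r args. rewrite (hr r (fun k => t (args k))).
    replace (fun k => s (t (args k))) with args; [reflexivity|].
    apply functional_extensionality; auto.
Qed.

Lemma autf_automorphism K s : autf M K s -> automorphism M s.
Proof.
  induction 1; eauto using automorphism_id, automorphism_comp, automorphism_inverse.
Qed.

End Automorphisms.

Section LascarInvariance.
Variables (Sg : signature) (M : structure Sg) (K I : Type).
Hypothesis hM : monster M K.
Hypothesis hI : countable I.

(* [x] and [s x] have the same type over the fixed model, so both realize the
   limit of one ultrafilter, and a coheir sequence links them. *)
Lemma fixes_small_model_lascar_equiv s : automorphism M s -> fixes_small_model M K s ->
  forall x : I -> M, lascar_equiv M I x (fun i => s (x i)).
Proof.
  intros hs [N [e [he [hNK hfix]]]] x.
  destruct hM as [[m0] [hB [hsat _]]]. destruct hI as [code hcode].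
  destruct (ultrafilter_of_type Sg M I code m0 hcode N e he x) as [U [hU HU]].
  assert (hx : averages Sg M I N e U e x) by (apply averages_of_type; auto).
  apply (coheir_lascar_equiv Sg M K hsat hB I code m0 hcode N e hNK U hU x); [exact hx|].
  intros phi Hphi%hx.
  rewrite <- (sat_automorphism Sg M s hs e phi x) in Hphi.
  replace (fun y => s (e y)) with e in Hphi; [exact Hphi|].
  apply functional_extensionality; intro y; auto.
Qed.

Lemma autf_lascar_equiv s : autf M K s ->
  forall x : I -> M, lascar_equiv M I x (fun i => s (x i)).
Proof.
  induction 1 as [s hs hfix| |s t _ IHs _ IHt|s t hs IHs hts hst]; intro x.
  - apply fixes_small_model_lascar_equiv; auto.
  - apply rt_refl.
  - eapply rt_trans; [apply IHt|apply (IHs (fun i => t (x i)))].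
  - apply lascar_equiv_sym. specialize (IHs (fun i => t (x i))). simpl in IHs.
    replace (fun i => s (t (x i))) with x in IHs; [exact IHs|].
    apply functional_extensionality; intro; auto.
Qed.

Variable C : (I -> M) -> Prop.
Hypothesis hC : lascar_class M I C.

Lemma lascar_class_autf_closed t c : autf M K t -> C c -> C (fun i => t (c i)).
Proof.
  intros ht Hc. destruct hC as [a0 ha0]. apply ha0. apply ha0 in Hc.
  eapply rt_trans; [exact Hc|]. apply autf_lascar_equiv; auto.
Qed.

(* Translates by [Aut f_L] preserve [C], so inclusion on [C] passes to translates. *)
Lemma generic_mono (A B : formula Sg M I) :
  (forall c, C c -> sat M (fun x => x) A c -> sat M (fun x => x) B c) ->
  generic M K I C A -> generic M K I C B.
Proof.
  intros hAB [l [hl hcov]]. exists l; split; auto.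
  intros c hc. specialize (hcov c hc). apply sat_bigOr in hcov.
  destruct hcov as [f [[s [<- hsl]]%in_map_iff hs]].
  apply sat_bigOr. exists (fmap s B). split; [apply (in_map (fun s0 => fmap s0 B)); auto|].
  pose proof (autf_automorphism Sg M K s (hl s hsl)) as has.
  pose proof has as [[t [hts hst]] _].
  assert (ht : autf M K t) by (eapply autf_inv; eauto).
  rewrite sat_fmap in hs |- *.
  replace c with (fun i => s (t (c i))) in hs |- *
    by (apply functional_extensionality; intro; auto).
  apply (sat_automorphism Sg M s has (fun x => x)).
  apply (sat_automorphism Sg M s has (fun x => x)) in hs.
  apply hAB; auto. apply lascar_class_autf_closed; auto.
Qed.

(* Consistency comes for free: an inconsistent conjunction would make [w] generic. *)
Lemma proper_wit_intro (q : formula Sg M I -> Prop) (w : formula Sg M I) :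
  ~ generic M K I C w ->
  (forall l, (forall phi, In phi l -> q phi) -> generic M K I C (fOr (bigAnd l) w)) ->
  proper_wit M K I C q w.
Proof.
  intros hw hl. split; [|split; auto].
  intros l Hl. apply NNPP. intro hcons. apply hw.
  apply (generic_mono (fOr (bigAnd l) w)); [|apply hl; auto].
  intros c _ [h|h]; auto. exfalso. apply hcons. exists c. apply sat_bigAnd, h.
Qed.

End LascarInvariance.

Section Refinement.
Variables (Sg : signature) (M : structure Sg) (K I : Type).
Hypothesis hM : monster M K.
Hypothesis hI : countable I.
Variable C : (I -> M) -> Prop.
Hypothesis hC : lascar_class M I C.
Variables (p : formula Sg M I -> Prop) (phi : nat -> formula Sg M I) (psi' psi : formula Sg M I).

Notation is_generic := (generic M K I C).
Notation sat0 := (sat M (fun x => x)).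

(* The witness tried for [p + phi k]: [psi'] and [psi] together with the parts
   of [phi 0, ..., phi (k-1)] already cut down by conjunctions [L] from [p]. *)
Definition refined_witness (L : list (formula Sg M I)) (k : nat) : formula Sg M I :=
  fOr psi' (fOr psi (bigOr (map (fun i => fAnd (bigAnd L) (phi i)) (seq 0 k)))).

Lemma sat_refined_witness L k v :
  sat0 (refined_witness L k) v <->
  sat0 psi' v \/ sat0 psi v \/ exists i, i < k /\ sat0 (bigAnd L) v /\ sat0 (phi i) v.
Proof.
  unfold refined_witness. simpl. rewrite sat_bigOr. split.
  - intros [h|[h|[f [[i [<- hi%in_seq]]%in_map_iff [h1 h2]]]]]; auto.
    right; right. exists i; split; [lia|auto].
  - intros [h|[h|[i [hi [h1 h2]]]]]; auto. right; right.
    exists (fAnd (bigAnd L) (phi i)). split; [|simpl; auto].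
    apply (in_map (fun i => fAnd (bigAnd L) (phi i))), in_seq. lia.
Qed.

Lemma bigAnd_split (l : list (formula Sg M I)) (q : formula Sg M I -> Prop) theta :
  (forall f, In f l -> q f \/ f = theta) ->
  exists lq, (forall f, In f lq -> q f) /\
    forall v, sat0 (bigAnd lq) v -> sat0 theta v -> sat0 (bigAnd l) v.
Proof.
  induction l as [|f l IH]; intro H; [exists []; split; [intros _ []|simpl; auto]|].
  destruct IH as [lq [H1 H2]]; [intros; apply H; right; auto|].
  destruct (H f (or_introl eq_refl)) as [hf| ->].
  - exists (f :: lq); split; [intros g [<-|hg]; auto|].
    intros v [h1 h2] h3. simpl. split; auto.
  - exists lq; split; auto. intros v h1 h2. simpl; split; auto.
Qed.

Lemma refined_witness_step L k :
  (forall f, In f L -> p f) -> ~ is_generic (refined_witness L k) ->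
  ~ proper M K I C (fun theta => p theta \/ theta = phi k) ->
  exists L', (forall f, In f L' -> p f) /\ ~ is_generic (refined_witness L' (S k)).
Proof.
  intros HL HnL Hnp.
  assert (Hex : exists l, (forall f, In f l -> p f \/ f = phi k) /\
                  ~ is_generic (fOr (bigAnd l) (refined_witness L k))).
  { apply NNPP. intro h. apply Hnp. exists (refined_witness L k).
    apply proper_wit_intro; auto.
    intros l hl. apply NNPP. intro h'. apply h. eauto. }
  destruct Hex as [l [hl hng]].
  destruct (bigAnd_split l p (phi k) hl) as [lp [hlp hsub]].
  exists (L ++ lp). split; [intros f [?|?]%in_app_or; auto|].
  intro hg. apply hng. revert hg. apply generic_mono; auto.
  intros c _ hs. apply sat_refined_witness in hs.
  change (sat0 (bigAnd l) c \/ sat0 (refined_witness L k) c).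
  rewrite sat_refined_witness.
  destruct hs as [h|[h|[i [hi [h1 h2]]]]]; auto.
  rewrite sat_bigAnd in h1.
  assert (hL : sat0 (bigAnd L) c) by (apply sat_bigAnd; intros; apply h1, in_or_app; auto).
  destruct (Nat.eq_dec i k) as [->|hik].
  - left. apply hsub; auto. apply sat_bigAnd; intros; apply h1, in_or_app; auto.
  - right. right; right. exists i; split; [lia|auto].
Qed.

Lemma refined_witness_nongeneric n :
  ~ is_generic (fOr psi' psi) ->
  (forall i, i < n -> ~ proper M K I C (fun theta => p theta \/ theta = phi i)) ->
  exists L, (forall f, In f L -> p f) /\ ~ is_generic (refined_witness L n).
Proof.
  intros hng Hno. induction n as [|k IHk].
  - exists []. split; [intros _ []|]. intro hg. apply hng. revert hg.
    apply generic_mono; auto. intros c _ hs%sat_refined_witness.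
    destruct hs as [h|[h|[i [hi _]]]]; [left|right|lia]; auto.
  - destruct IHk as [L [HL HnL]]; [intros; apply Hno; lia|].
    apply (refined_witness_step L k); auto.
Qed.

Lemma refined_witness_covers L n :
  covers M I C (fOr (bigOr (map phi (seq 0 n))) psi') ->
  forall c, C c -> sat0 (fOr (bigAnd L) psi) c -> sat0 (refined_witness L n) c.
Proof.
  intros hcov c hc hs. apply sat_refined_witness.
  destruct hs as [hL|h]; auto.
  destruct (hcov c hc) as [[f [[i [<- hi%in_seq]]%in_map_iff hf]]%sat_bigOr|h]; auto.
  right; right. exists i; split; [lia|auto].
Qed.

End Refinement.

Theorem lemma4p8 (S : signature) (M : structure S) (K : Type) (I : Type)
  (hS : countable_signature S) (hM : monster M K) (hI : countable I)
  (C : (I -> M) -> Prop) (hC : lascar_class M I C)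
  (p : formula S M I -> Prop) (psi : formula S M I)
  (hp : proper_wit M K I C p psi)
  (n : nat) (phi : nat -> formula S M I) (psi' : formula S M I)
  (hcov : covers M I C (fOr (bigOr (map phi (seq 0 n))) psi'))
  (hng : ~ generic M K I C (fOr psi' psi)) :
  exists i, i < n /\ proper M K I C (fun theta => p theta \/ theta = phi i).
Proof.
  apply NNPP. intro Hno.
  destruct hp as [_ [_ hpsi]].
  destruct (refined_witness_nongeneric S M K I hM hI C hC p phi psi' psi n hng)
    as [L [HL HnL]].
  { intros i hi hpr. apply Hno. eauto. }
  apply HnL. apply (generic_mono S M K I hM hI C hC (fOr (bigAnd L) psi)).
  - apply refined_witness_covers; auto.
  - apply hpsi; auto.
Qed.
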